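(* Let $G$ be a neighborhood unit square graph with $V(G)\neq\emptyset$. Let $X$ be the set of vertices $v\in V(G)$ for which there exist vertices $w_1,\dots,w_6\in V(G)\setminus\{v\}$ with $vw_i\notin E(G)$ for all $i\in[6]$ and $G[\{w_1,\dots,w_6\}]\cong S_3$. Then $X\ne V(G)$.
   Context: A neighborhood unit square graph is a graph $G$ admitting a map $f\colon V(G)\to[-1,1]^2$ such that for distinct $v,w$, $vw\in E(G)$ iff $\|f(v)-f(w)\|_\infty\le1$. $S_3$ (the 3-sun) is the graph on $w_1,\dots,w_6$ with edges $w_4w_5,w_5w_6,w_4w_6$ (a triangle), $w_1w_4,w_1w_6$, $w_2w_4,w_2w_5$, $w_3w_5,w_3w_6$. *)

From mathcomp Require Import all_boot.
From Stdlib Require Import Reals.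

Set Implicit Arguments.
Unset Strict Implicit.
Unset Printing Implicit Defensive.

Definition linf_dist (p q : R * R) : R :=
  Rmax (Rabs (fst p - fst q)%R) (Rabs (snd p - snd q)%R).

Definition nbhd_unit_square_graph (T : finType) (e : rel T) : Prop :=
  exists f : T -> R * R,
    (forall v, (-1 <= fst (f v) <= 1)%R /\ (-1 <= snd (f v) <= 1)%R) /\
    (forall v w, v <> w -> (e v w <-> (linf_dist (f v) (f w) <= 1)%R)).

(* The 3-sun S_3 on vertices w_1..w_6, indexed 0..5. *)
Definition s3_edge (i j : nat) : bool :=
  [|| (i == 3) && (j == 4), (i == 4) && (j == 5), (i == 3) && (j == 5),
      (i == 0) && (j == 3), (i == 0) && (j == 5), (i == 1) && (j == 3),
      (i == 1) && (j == 4), (i == 2) && (j == 4) | (i == 2) && (j == 5)].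

Definition s3_adj (i j : 'I_6) : bool := s3_edge i j || s3_edge j i.

Definition in_X (T : finType) (e : rel T) (v : T) : Prop :=
  exists w : 'I_6 -> T,
    injective w /\
    (forall i, w i <> v /\ ~ e v (w i)) /\
    (forall i j, i <> j -> (e (w i) (w j) <-> s3_adj i j)).

From mathcomp Require Import all_boot.
From Stdlib Require Import Reals Lra.

Set Implicit Arguments.
Unset Strict Implicit.
Unset Printing Implicit Defensive.

(* Let v minimise min(|x|, |y|) over the realisation, and use a symmetry of the
   square to put f v = (a, m) with 0 <= m <= a <= 1.  A point of [-1,1]^2 at
   distance > 1 from (a, m) whose coordinates both have modulus >= m lies in one
   of three boxes of side <= 1: upper left, lower left or lower right; the two
   outer boxes are more than 1 apart vertically.  So a 3-sun avoiding v would be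
   covered by three cliques arranged along a path, which is impossible: the two
   outer cliques each contain one of the independent vertices, their common
   neighbour in the triangle must then lie in the middle clique, but it is not
   adjacent to the third independent vertex, which also lies there. *)

Inductive zone : Type := Upper | LowerLeft | LowerRight.

Lemma s3_adjC (i j : 'I_6) : s3_adj i j = s3_adj j i.
Proof. by rewrite /s3_adj orbC. Qed.

Section S3ZoneCover.

Variable z : 'I_6 -> zone.
Hypothesis zone_clique : forall i j, i != j -> z i = z j -> s3_adj i j.
Hypothesis zone_gap : forall i j, z i = Upper -> z j = LowerRight -> ~~ s3_adj i j.

Lemma zone_middle_free (i j k t : 'I_6) :
  j != t -> ~~ s3_adj j t -> s3_adj i t -> s3_adj k t ->
  z i = Upper -> z k = LowerRight -> z j <> LowerLeft.
Proof.
move=> jt njt it kt zi zk zj; case zt: (z t).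
- by move: (zone_gap zt zk); rewrite s3_adjC kt.
- by move: njt; rewrite zone_clique // zj zt.
- by move: (zone_gap zi zt); rewrite it.
Qed.

Lemma no_s3_zone_cover : False.
Proof.
pose w0 : 'I_6 := @Ordinal 6 0 isT. pose w1 : 'I_6 := @Ordinal 6 1 isT.
pose w2 : 'I_6 := @Ordinal 6 2 isT. pose w3 : 'I_6 := @Ordinal 6 3 isT.
pose w4 : 'I_6 := @Ordinal 6 4 isT. pose w5 : 'I_6 := @Ordinal 6 5 isT.
have split_zones i j : i != j -> ~~ s3_adj i j -> z i <> z j.
  by move=> ij /negP nij /(zone_clique ij).
have := split_zones w0 w1 isT isT; have := split_zones w0 w2 isT isT.
have := split_zones w1 w2 isT isT.
(* [w4], [w5], [w3] are the common neighbours of the independent pairs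
   avoiding [w0], [w1], [w2] respectively. *)
have mid0 i k := @zone_middle_free i w0 k w4 isT isT.
have mid1 i k := @zone_middle_free i w1 k w5 isT isT.
have mid2 i k := @zone_middle_free i w2 k w3 isT isT.
move: (mid0 w1 w2 isT isT) (mid0 w2 w1 isT isT) (mid1 w0 w2 isT isT).
move: (mid1 w2 w0 isT isT) (mid2 w0 w1 isT isT) (mid2 w1 w0 isT isT).
by case: (z w0) (z w1) (z w2) => [] [] [] /=; intuition.
Qed.

End S3ZoneCover.

Local Open Scope R_scope.

Definition in_square (p : R * R) : Prop :=
  -1 <= fst p <= 1 /\ -1 <= snd p <= 1.

Definition min_abs (p : R * R) : R := Rmin (Rabs (fst p)) (Rabs (snd p)).

Lemma linf_distC (p q : R * R) : linf_dist p q = linf_dist q p.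
Proof. by rewrite /linf_dist Rabs_minus_sym (Rabs_minus_sym (snd p)). Qed.

Lemma Rabs_le_bounds (x b : R) : Rabs x <= b -> - b <= x <= b.
Proof. by move=> H; have := Rle_abs x; have := Rle_abs (- x); rewrite Rabs_Ropp; lra. Qed.

Lemma Rabs_ge_cases (m x : R) : m <= Rabs x -> m <= x \/ x <= - m.
Proof.
by case: (Rle_or_lt 0 x) => [/Rabs_pos_eq | /Rabs_left] ->; lra.
Qed.

Lemma linf_dist_le1 (p q : R * R) :
  linf_dist p q <= 1 <-> -1 <= fst p - fst q <= 1 /\ -1 <= snd p - snd q <= 1.
Proof.
rewrite /linf_dist; split=> [H | [Hx Hy]].
- by split; apply: Rabs_le_bounds; [apply: Rle_trans (Rmax_l _ _) H
                                    | apply: Rle_trans (Rmax_r _ _) H].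
- by apply: Rmax_lub; apply: Rabs_le; lra.
Qed.

Definition square_sym (s1 s2 sw : bool) (p : R * R) : R * R :=
  let q := if sw then (snd p, fst p) else p in
  (if s1 then - fst q else fst q, if s2 then - snd q else snd q).

Lemma linf_dist_square_sym s1 s2 sw p q :
  linf_dist (square_sym s1 s2 sw p) (square_sym s1 s2 sw q) = linf_dist p q.
Proof.
have Rabs_opp_sub x y : Rabs (- x - - y) = Rabs (x - y).
  by rewrite -Rabs_Ropp; congr Rabs; ring.
case: p q => [x y] [x' y']; rewrite /linf_dist /square_sym.
by case: s1; case: s2; case: sw; rewrite /= ?Rabs_opp_sub // Rmax_comm.
Qed.

Lemma min_abs_square_sym s1 s2 sw p : min_abs (square_sym s1 s2 sw p) = min_abs p.
Proof.
case: p => [x y]; rewrite /min_abs /square_sym.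
by case: s1; case: s2; case: sw; rewrite /= ?Rabs_Ropp // Rmin_comm.
Qed.

Lemma in_square_sym s1 s2 sw p : in_square p -> in_square (square_sym s1 s2 sw p).
Proof.
by case: p => [x y]; rewrite /in_square /square_sym; case: s1; case: s2; case: sw => /=; lra.
Qed.

Lemma square_sym_normal p :
  exists s1 s2 sw, 0 <= snd (square_sym s1 s2 sw p) <= fst (square_sym s1 s2 sw p).
Proof.
case: p => [x y]; rewrite /square_sym /=.
case: (Rle_or_lt (Rabs y) (Rabs x));
  (case: (Rle_or_lt 0 x) => hx; [rewrite (Rabs_pos_eq x hx) | rewrite (Rabs_left x hx)]);
  (case: (Rle_or_lt 0 y) => hy; [rewrite (Rabs_pos_eq y hy) | rewrite (Rabs_left y hy)]);
  move=> hxy.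
- by exists false, false, false => /=; lra.
- by exists false, true, false => /=; lra.
- by exists true, false, false => /=; lra.
- by exists true, true, false => /=; lra.
- by exists false, false, true => /=; lra.
- by exists true, false, true => /=; lra.
- by exists false, true, true => /=; lra.
- by exists true, true, true => /=; lra.
Qed.

Lemma min_abs_normal p : 0 <= snd p <= fst p -> min_abs p = snd p.
Proof.
case=> h0 h1; rewrite /min_abs !Rabs_pos_eq; try lra.
by apply: Rmin_right.
Qed.

Lemma exists_argmin (T : finType) (g : T -> R) (x0 : T) :
  exists v, forall w, g v <= g w.
Proof.
suff [v vmin] : exists v, forall w, w \in x0 :: enum T -> g v <= g w.
  by exists v => w; apply: vmin; rewrite inE mem_enum orbT.
elim: (enum T) x0 => [|y s IH] x.
  by exists x => w; rewrite inE => /eqP ->; apply: Rle_refl.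
have [v vmin] := IH y; case: (Rle_or_lt (g x) (g v)) => [xv | vx].
- exists x => w; rewrite inE => /orP [/eqP -> | ws]; first exact: Rle_refl.
  exact: Rle_trans xv (vmin w ws).
- exists v => w; rewrite inE => /orP [/eqP -> | ws]; [exact: Rlt_le | exact: vmin].
Qed.

Definition zone_of (m : R) (p : R * R) : zone :=
  if Rle_dec m (snd p) then Upper else if Rle_dec m (fst p) then LowerRight else LowerLeft.

Definition zone_box (a m : R) (Z : zone) (p : R * R) : Prop :=
  match Z with
  | Upper => -1 <= fst p < a - 1 /\ m <= snd p <= 1
  | LowerLeft => -1 <= fst p <= - m /\ -1 <= snd p <= - m
  | LowerRight => m <= fst p <= 1 /\ -1 <= snd p < m - 1
  end.

(* What the normalised image of a vertex of the sun satisfies when f v = (a, m);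
   the bounds on the moduli come from the minimality of v. *)
Definition admissible (a m : R) (p : R * R) : Prop :=
  in_square p /\ m <= Rabs (fst p) /\ m <= Rabs (snd p) /\ 1 < linf_dist p (a, m).

Lemma admissible_zone_box a m p :
  0 <= m <= a /\ a <= 1 -> admissible a m p -> zone_box a m (zone_of m p) p.
Proof.
move=> am [[hx hy] [/Rabs_ge_cases mx [/Rabs_ge_cases my far]]].
have {}far : fst p < a - 1 \/ snd p < m - 1.
  case: (Rlt_or_le (fst p) (a - 1)) => [| xa]; first by left.
  case: (Rlt_or_le (snd p) (m - 1)) => [| ym]; first by right.
  by case: (Rlt_not_le _ _ far); apply/linf_dist_le1 => /=; lra.
rewrite /zone_of; case: Rle_dec => [? | /Rnot_le_lt ?] /=.
  by case: far; case: mx; lra.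
by case: Rle_dec => [? | /Rnot_le_lt ?] /=; case: far; case: mx; case: my; lra.
Qed.

Lemma zone_box_close a m Z p q :
  0 <= m <= a /\ a <= 1 -> zone_box a m Z p -> zone_box a m Z q -> linf_dist p q <= 1.
Proof. by move=> am hp hq; apply/linf_dist_le1; case: Z hp hq => /=; lra. Qed.

Lemma zone_box_gap a m p q :
  zone_box a m Upper p -> zone_box a m LowerRight q -> 1 < linf_dist p q.
Proof. by move=> /= hp hq; apply: Rnot_le_lt => /linf_dist_le1; lra. Qed.

Section Realisation.

Variables (T : finType) (e : rel T) (f : T -> R * R).
Hypothesis f_square : forall x, in_square (f x).
Hypothesis f_adj : forall x y, x <> y -> (e x y <-> linf_dist (f x) (f y) <= 1).

Lemma min_abs_minimiser_notin_X v :
  (forall x, min_abs (f v) <= min_abs (f x)) -> ~ in_X e v.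
Proof.
move=> vmin [w [w_inj [w_v w_s3]]].
have [s1 [s2 [sw v_normal]]] := square_sym_normal (f v).
pose g x := square_sym s1 s2 sw (f x).
have g_dist x y : linf_dist (g x) (g y) = linf_dist (f x) (f y).
  exact: linf_dist_square_sym.
pose a := fst (g v); pose m := snd (g v).
have am : 0 <= m <= a /\ a <= 1.
  by split; last by case: (in_square_sym s1 s2 sw (f_square v)) => -[].
have adm i : admissible a m (g (w i)).
  have [wv not_vw] := w_v i.
  have m_le : m <= min_abs (g (w i)).
    by rewrite /m -(min_abs_normal v_normal) !min_abs_square_sym.
  split; first exact: in_square_sym.
  split; first exact: Rle_trans m_le (Rmin_l _ _).
  split; first exact: Rle_trans m_le (Rmin_r _ _).
  have -> : (a, m) = g v by rewrite /a /m; case: (g v).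
  rewrite g_dist linf_distC; apply: Rnot_le_lt => close.
  by apply: not_vw; apply/f_adj => // /esym.
have box i := admissible_zone_box am (adm i).
apply: (@no_s3_zone_cover (fun i => zone_of m (g (w i)))) => [i j ij zij | i j zi zj].
- have {}ij : i <> j by apply/eqP.
  apply/(w_s3 _ _ ij)/f_adj; first by move/w_inj.
  rewrite -g_dist; apply: (zone_box_close am (box i)).
  by rewrite zij; exact: box j.
- have ij : i <> j by move=> ij; move: zi; rewrite ij zj.
  have wij : w i <> w j by move/w_inj.
  apply/negP => /(w_s3 _ _ ij)/(f_adj wij).
  rewrite -g_dist; apply: Rlt_not_le; apply: (@zone_box_gap a m).
  + by rewrite -zi; exact: box.
  + by rewrite -zj; exact: box.
Qed.

End Realisation.

Local Close Scope R_scope.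

Theorem mainTheorem19 (T : finType) (e : rel T)
  (e_irrefl : irreflexive e)
  (hG : nbhd_unit_square_graph e)
  (hne : (0 < #|T|)%N) :
  ~ (forall v : T, in_X e v).
Proof.
move=> allX; case: hG => f [f_square f_adj].
case/card_gt0P: hne => x0 _.
have [v vmin] := exists_argmin (fun x => min_abs (f x)) x0.
exact: (min_abs_minimiser_notin_X f_square f_adj vmin (allX v)).
Qed.
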